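(* Let $n \ge 2$ be an integer. For each $j \in \{1,\dots,n\}$ let $k_j, p_j, q_j, v_j$ be four distinct prime numbers with $k_j, p_j, q_j > v_j$; let $y_j$ be an integer with $1 \le y_j < v_j$, and let $y_j^{-1}$ denote the integer with $1 \le y_j^{-1} < v_j$ and $y_j \cdot y_j^{-1} \equiv 1 \pmod{v_j}$. Define $$N_j = k_j p_j,\qquad e_j = k_j q_j + y_j^{-1},\qquad d_j = v_j^{k_j} \bmod N_j,$$ and assume that $N_1,\dots,N_n$ are pairwise relatively prime. Let $f_j, t_j, r_j$ be positive integers and define $$N'_j = N_j f_j + d_j t_j,\qquad X=\prod_{l=1}^n N_l,$$ let $A_j$ be an integer with $A_j\cdot \frac{X}{N_j} \equiv 1 \pmod{N_j}$, and set $$AX_j = A_j \cdot \frac{X}{N_j},\qquad e'_j = e_j + N'_j r_j,\qquad S_j = e'_j \cdot AX_j .$$ Let $m_1,\dots,m_n$ be nonnegative integers and let $$C = \Big(\sum_{j=1}^n m_j S_j\Big) \bmod X .$$ Fix $i \in \{1,\dots,n\}$ and suppose that $m_i < v_i$ and $$m_i < \frac{k_i}{y_i^{-1} + v_i\, t_i\, r_i}.$$ Then $$\big((C \bmod k_i)\cdot y_i\big) \bmod v_i = m_i .$$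
   Context: This is the correctness (validation) of the AMOUN multi-recipient encryption scheme: recipient $i$ has private key $(k_i, v_i, y_i)$ and public key $(N_i, e_i, d_i)$; the sender, using the public keys of all $n$ recipients and random integers $f_j,t_j$ (initialization) and random coins $r_j$ (encryption), forms a single ciphertext $C$ encoding the message vector $(m_1,\dots,m_n)$; recipient $i$ decrypts by computing $((C \bmod k_i)\cdot y_i) \bmod v_i$. Here $a \bmod b$ denotes the least nonnegative residue of $a$ modulo $b$. *)

From HB Require Import structures.
From mathcomp Require Import all_boot all_order all_algebra.
Set Implicit Arguments. Unset Strict Implicit. Unset Printing Implicit Defensive.
Import Order.TTheory GRing.Theory Num.Theory.

Definition amoun_N (k p : nat) : nat := k * p.
Definition amoun_e (k q yinv : nat) : nat := k * q + yinv.
Definition amoun_d (k p v : nat) : nat := v ^ k %% (k * p).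

From HB Require Import structures.
From mathcomp Require Import all_boot all_order all_algebra.
From mathcomp Require Import ring.
Import Order.TTheory GRing.Theory Num.Theory.

(* Everything happens modulo k_i.  As k_i divides N_i and hence X, the
   reduction modulo X is invisible modulo k_i; the CRT coefficients AX_j are
   divisible by k_i for j <> i and congruent to 1 for j = i; and by Fermat
   d_i = v_i^k_i is congruent to v_i, so e'_i is congruent to
   y_i^-1 + v_i t_i r_i.  Hence C is congruent to m_i (y_i^-1 + v_i t_i r_i),
   which the size bound makes the least residue of C modulo k_i; multiplying
   by y_i cancels y_i^-1 and turns the rest into a multiple of v_i. *)

Lemma modz_dvdm (d X m : int) : (d %| X)%Z -> ((m %% X)%Z = m %[mod d])%Z.
Proof.
by case/dvdzP=> q ->; rewrite [in RHS](divz_eq m (q * d)) mulrA modzMDl.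
Qed.

Lemma dvdn_prod_div (I : finType) (N : I -> nat) (i j : I) :
  (0 < N j)%N -> i != j -> (N i %| (\prod_l N l) %/ N j)%N.
Proof.
by move=> Nj_gt0 neq_ij; rewrite (bigD1 j) //= mulKn // (bigD1 i) //= dvdn_mulr.
Qed.

Lemma crt_basis_sum_mod {I : finType} {N : I -> nat} {A : I -> int}
    (c : I -> int) {i : I} {d : nat} :
  (forall l, 0 < N l)%N -> (d %| N i)%N ->
  ((A i * ((\prod_l N l) %/ N i)%N%:Z)%R = 1 %[mod (N i)%:Z])%Z ->
  ((\sum_j c j * (A j * ((\prod_l N l) %/ N j)%N%:Z))%R = c i %[mod d])%Z.
Proof.
move=> N_gt0 dvd_d_Ni /eqP; rewrite eqz_mod_dvd => Ni_dvd.
apply/eqP; rewrite eqz_mod_dvd (bigD1 i) //= addrAC.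
rewrite -[X in (_ - X)%R]mulr1 -mulrBr.
apply: rpredD; first exact/dvdz_mull/(dvdz_trans _ Ni_dvd).
apply: rpred_sum => j neq_ji; apply/dvdz_mull/dvdz_mull.
by apply: (dvdn_trans dvd_d_Ni); apply: dvdn_prod_div; rewrite // eq_sym.
Qed.

Lemma amoun_d_mod (k p v : nat) : prime k -> amoun_d k p v = v %[mod k].
Proof.
by move=> k_pr; rewrite /amoun_d modn_dvdm ?dvdn_mulr // fermat_little.
Qed.

Lemma amoun_e_blinded_mod (k p q v yinv f t r : nat) : prime k ->
  amoun_e k q yinv + (amoun_N k p * f + amoun_d k p v * t) * r
    = yinv + v * t * r %[mod k].
Proof.
move=> k_pr.
have -> : amoun_e k q yinv + (amoun_N k p * f + amoun_d k p v * t) * r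
    = (q + p * f * r) * k + (yinv + amoun_d k p v * t * r).
  by rewrite /amoun_e /amoun_N; ring.
by rewrite modnMDl -modnDmr -!mulnA -modnMml amoun_d_mod // modnMml modnDmr.
Qed.

Lemma amoun_unmask_mod (m v y yinv s : nat) :
  m < v -> y * yinv = 1 %[mod v] -> m * (yinv + v * s) * y %% v = m.
Proof.
move=> m_lt_v y_yinv.
have -> : m * (yinv + v * s) * y = m * s * y * v + m * (y * yinv) by ring.
by rewrite modnMDl -modnMmr y_yinv modnMmr muln1 modn_small.
Qed.

Lemma ltn_mul_of_ltr_div (R : numFieldType) (a b c : nat) :
  (0 < b)%N -> (a%:R < c%:R / b%:R :> R)%R -> a * b < c.
Proof.
by rewrite -(ltr0n R) => b_gt0; rewrite ltr_pdivlMr // -natrM ltr_nat.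
Qed.

Theorem mainTheorem1 (n : nat) (k p q v y yinv f t r : 'I_n -> nat)
    (A : 'I_n -> int) (m : 'I_n -> nat) (i : 'I_n) :
  (2 <= n)%N ->
  (forall j, [/\ prime (k j), prime (p j), prime (q j) & prime (v j)]) ->
  (forall j, uniq [:: k j; p j; q j; v j]) ->
  (forall j, [/\ (v j < k j)%N, (v j < p j)%N & (v j < q j)%N]) ->
  (forall j, (1 <= y j)%N && (y j < v j)%N) ->
  (forall j, (1 <= yinv j)%N && (yinv j < v j)%N) ->
  (forall j, y j * yinv j = 1 %[mod v j]) ->
  (forall j l, j != l -> coprime (amoun_N (k j) (p j)) (amoun_N (k l) (p l))) ->
  (forall j, [/\ (0 < f j)%N, (0 < t j)%N & (0 < r j)%N]) ->
  let N := fun j => amoun_N (k j) (p j) in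
  let e := fun j => amoun_e (k j) (q j) (yinv j) in
  let d := fun j => amoun_d (k j) (p j) (v j) in
  let N' := fun j => N j * f j + d j * t j in
  let X := (\prod_(l < n) N l)%N in
  (forall j, ((A j * (X %/ N j)%N%:Z)%R = 1 %[mod (N j)%:Z])%Z) ->
  let AX := fun j => (A j * (X %/ N j)%N%:Z)%R in
  let e' := fun j => (e j + N' j * r j)%N in
  let S := fun j => ((e' j)%:Z * AX j)%R in
  let C := ((\sum_(j < n) (m j)%:Z * S j)%R %% X%:Z)%Z in
  (m i < v i)%N ->
  ((m i)%:Q < (k i)%:Q / (yinv i + v i * t i * r i)%N%:Q)%R ->
  (modz (modz C (Posz (k i)) * Posz (y i))%R (Posz (v i)) = Posz (m i)).
Proof.
(* Pairwise coprimality of the N_j only guarantees that the A_j exist. *)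
move=> _ kpqv_prime _ _ _ yinv_range y_yinv _ _ N e d N' X A_inv AX e' S C
  m_lt_v m_lt_bound.
set M := (m i * (yinv i + v i * t i * r i))%N.
have k_prime : prime (k i) by case: (kpqv_prime i).
have N_gt0 l : (0 < N l)%N.
  case: (kpqv_prime l) => /prime_gt0 k_gt0 /prime_gt0 p_gt0 _ _.
  by rewrite muln_gt0 k_gt0.
have k_dvd_N : (k i %| N i)%N by apply: dvdn_mulr.
have M_lt_k : (M < k i)%N.
  apply: (@ltn_mul_of_ltr_div rat) m_lt_bound.
  by case/andP: (yinv_range i); rewrite addn_gt0 => ->.
have C_mod_k : (C = M %[mod k i])%Z.
  rewrite /C modz_dvdm; last first.
    by apply: (dvdn_trans k_dvd_N); rewrite /X (bigD1 i) //= dvdn_mulr.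
  under eq_bigr => j _ do rewrite /S mulrA.
  rewrite (crt_basis_sum_mod (fun j => Posz (m j) * Posz (e' j))%R
    N_gt0 k_dvd_N (A_inv i)).
  by rewrite -PoszM !modz_nat -modnMmr amoun_e_blinded_mod // modnMmr.
rewrite C_mod_k modz_nat modn_small // -PoszM modz_nat.
by rewrite /M -[v i * _ * _]mulnA amoun_unmask_mod.
Qed.
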